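(* Let $G=(V,E)$ be a graph with colouring $f:V\to\{B,R\}$. If $E'$ is an optimal solution to the MIE problem on $(G,f)$, or an optimal solution to the MIAE problem on $(G,f)$, then no edge of $E'\setminus E$ has both endpoints red.
   Context: Graphs are finite, simple and undirected. A colouring $f:V\to\{B,R\}$ partitions $V$ into the blue nodes $B=f^{-1}(B)$ and red nodes $R=f^{-1}(R)$. For an edge set $E'$ on $V$ and $v\in V$, let $b_{E'}(v)$ and $r_{E'}(v)$ be the numbers of blue and red neighbours of $v$ in $(V,E')$. A node $v$ is under (majority) illusion in $(V,E')$ if $r_{E'}(v)>b_{E'}(v)$. Standing assumption: $|B|>|R|$. An optimal solution to MIAE is an edge set $E'\supseteq E$ on $V$ such that no node is under illusion in $(V,E')$ and $|E'\setminus E|$ is minimum among all such sets. An optimal solution to MIRE is an edge set $E'\subseteq E$ such that no node is under illusion in $(V,E')$ and $|E\setminus E'|$ is minimum among all such sets. An optimal solution to MIE is an edge set $E'$ on $V$ such that no node is under illusion in $(V,E')$ and $|E\setminus E'|+|E'\setminus E|$ is minimum among all such sets. *)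

From mathcomp Require Import all_boot.
Set Implicit Arguments. Unset Strict Implicit. Unset Printing Implicit Defensive.

Inductive colour := Blue | Red.

Definition is_blue (c : colour) : bool := if c is Blue then true else false.
Definition is_red (c : colour) : bool := if c is Red then true else false.

Section Graphs.
Variable T : finType.

(* An edge set on V = T: a set of 2-element subsets of T
   (finite, simple, undirected). *)
Definition edge_set (E : {set {set T}}) : bool :=
  [forall e in E, #|e| == 2].

Definition blue_nodes (f : T -> colour) : {set T} := [set v | is_blue (f v)].
Definition red_nodes (f : T -> colour) : {set T} := [set v | is_red (f v)].

Definition bdeg (f : T -> colour) (E : {set {set T}}) (v : T) : nat :=
  #|[set u | is_blue (f u) & [set u; v] \in E]|.
Definition rdeg (f : T -> colour) (E : {set {set T}}) (v : T) : nat :=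
  #|[set u | is_red (f u) & [set u; v] \in E]|.

Definition under_illusion f E v : bool := bdeg f E v < rdeg f E v.

Definition no_illusion f E : bool := [forall v, ~~ under_illusion f E v].

Definition optimal_MIAE f (E E' : {set {set T}}) : Prop :=
  [/\ edge_set E', E \subset E', no_illusion f E' &
      forall E'', edge_set E'' -> E \subset E'' -> no_illusion f E'' ->
        #|E' :\: E| <= #|E'' :\: E| ].

Definition optimal_MIRE f (E E' : {set {set T}}) : Prop :=
  [/\ edge_set E', E' \subset E, no_illusion f E' &
      forall E'', edge_set E'' -> E'' \subset E -> no_illusion f E'' ->
        #|E :\: E'| <= #|E :\: E''| ].

Definition optimal_MIE f (E E' : {set {set T}}) : Prop :=
  [/\ edge_set E', no_illusion f E' &
      forall E'', edge_set E'' -> no_illusion f E'' ->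
        #|E :\: E'| + #|E' :\: E| <= #|E :\: E''| + #|E'' :\: E| ].

End Graphs.

From mathcomp Require Import all_boot.

(* Deleting an added edge whose endpoints are both red only removes red
   neighbours, so no node falls under illusion; it keeps the removed-edge
   count and lowers the added-edge count by one, contradicting optimality
   for MIE as well as for MIAE. *)

Set Implicit Arguments.
Unset Strict Implicit.
Unset Printing Implicit Defensive.

Section RedEdgeRemoval.
Variables (T : finType) (f : T -> colour).

Lemma edge_set_subset (E1 E2 : {set {set T}}) :
  E1 \subset E2 -> edge_set E2 -> edge_set E1.
Proof.
move=> /subsetP sE12 /forallP E2_edges; apply/forallP=> e; apply/implyP=> eE1.
exact: (implyP (E2_edges e) (sE12 e eE1)).
Qed.

Lemma rdeg_subset (E1 E2 : {set {set T}}) v :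
  E1 \subset E2 -> rdeg f E1 v <= rdeg f E2 v.
Proof.
move=> /subsetP sE12; apply: subset_leq_card; apply/subsetP=> u.
by rewrite !inE => /andP [-> /sE12].
Qed.

Lemma bdeg_setD1_red (E : {set {set T}}) (e : {set T}) v :
  e \subset red_nodes f -> bdeg f (E :\ e) v = bdeg f E v.
Proof.
move=> /subsetP e_red; apply: eq_card => u; rewrite !inE.
case u_blue: (is_blue (f u)) => //=; rewrite andb_idl // => _.
apply/eqP=> uv_e; have := e_red u; rewrite -uv_e !inE eqxx => /(_ isT).
by case: (f u) u_blue.
Qed.

Lemma no_illusion_setD1_red (E : {set {set T}}) (e : {set T}) :
  e \subset red_nodes f -> no_illusion f E -> no_illusion f (E :\ e).
Proof.
move=> e_red /forallP noE; apply/forallP=> v; have := noE v.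
rewrite /under_illusion -!leqNgt bdeg_setD1_red // => /(leq_trans _); apply.
exact/rdeg_subset/subD1set.
Qed.

End RedEdgeRemoval.

Lemma card_added_setD1 (T : finType) (E E' : {set T}) e :
  e \in E' :\: E -> #|(E' :\ e) :\: E| < #|E' :\: E|.
Proof.
move=> e_added; rewrite (cardsD1 e (E' :\: E)) e_added ltnS.
apply/subset_leq_card/subsetP=> x; rewrite !inE.
by case: (x == e); case: (x \in E).
Qed.

Lemma removed_setD1_added (T : finType) (E E' : {set T}) e :
  e \notin E -> E :\: (E' :\ e) = E :\: E'.
Proof.
move=> eNE; apply/setP=> x; rewrite !inE.
by have [->|//] := eqVneq x e; rewrite (negbTE eNE) !andbF.
Qed.

Theorem mainTheorem1 (T : finType) (E : {set {set T}}) (f : T -> colour)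
    (E' : {set {set T}}) :
  edge_set E ->
  #|red_nodes f| < #|blue_nodes f| ->
  optimal_MIE f E E' \/ optimal_MIAE f E E' ->
  forall e, e \in E' :\: E -> ~~ (e \subset red_nodes f).
Proof.
move=> _ _ opt e e_added; apply/negP=> e_red.
have [_ eNE] := setDP e_added.
have fewer_added := card_added_setD1 e_added.
case: opt => [[edgesE' noE' minE']|[edgesE' sEE' noE' minE']].
- have edgesE'e : edge_set (E' :\ e) by exact: edge_set_subset (subD1set E' e) edgesE'.
  have := minE' _ edgesE'e (no_illusion_setD1_red e_red noE').
  by rewrite removed_setD1_added // leq_add2l leqNgt fewer_added.
- have edgesE'e : edge_set (E' :\ e) by exact: edge_set_subset (subD1set E' e) edgesE'.
  have sEE'e : E \subset E' :\ e by rewrite subsetD1 sEE'.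
  have := minE' _ edgesE'e sEE'e (no_illusion_setD1_red e_red noE').
  by rewrite leqNgt fewer_added.
Qed.
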